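(* Let $N\ge1$, $m\ge1$ be integers, let $k_1,k_2,k_3,k$ be integers with $k_1+k_2+k_3=2k$, $0\le k_j\le k\le N$, put $n=mN-k$, and let $g$ be a non-negative integer. Let $\mathbf{P}_m^{(N|k_1,k_2,k_3)}(t_1,\dots,t_n)$ be the symmetric polynomial defined in the context and expand $\prod_{1\le i<j\le n}(t_i-t_j)^{2g}\,\mathbf{P}_m^{(N|k_1,k_2,k_3)}(t_1,\dots,t_n)=\sum_{\nu}C_{\nu_1,\dots,\nu_n}t_1^{\nu_1}\cdots t_n^{\nu_n}.$ If $\nu_1\le\nu_2\le\dots\le\nu_n$ and $C_{\nu_1,\dots,\nu_n}\neq0$, then the following inequalities hold: $\nu_{pN+j}\ge p+(pN+j-1)g$ for $p=0,\dots,m-2$, $j=1,\dots,N-k_1$; $\nu_{pN+j}\ge p+1+(pN+j-1)g$ for $p=0,\dots,m-2$, $j=N-k_1+1,\dots,N$; $\nu_{N(m-1)+j}\ge m-1+((m-1)N+j-1)g$ for $j=1,\dots,N-k$; and $\nu_{pN+j}\le m+p-1+((m+p)N-k+j-2)g$ for $p=0,\dots,m-1$, $j=1,\dots,N-k$; $\nu_{pN+j}\le m+p-1+((m+p)N-k+j-2)g$ for $p=0,\dots,m-2$, $j=N-k+1,\dots,N-k+k_3$; $\nu_{pN+j}\le m+p+((m+p)N-k+j-2)g$ for $p=0,\dots,m-2$, $j=N-k+k_3+1,\dots,N$.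
   Context: Definition: fix a partition of $\{1,\dots,n\}$ into $N$ groups $s_1,\dots,s_N$, where $s_1,\dots,s_k$ have $m-1$ elements each and $s_{k+1},\dots,s_N$ have $m$ elements each. Let $\chi_1=\{s_1,\dots,s_{k-k_1}\}$, $\chi_2=\{s_{k-k_1+1},\dots,s_{k_3}\}$, $\chi_3=\{s_{k_3+1},\dots,s_k\}$. Define $p(x_1,x_2,x_3|t_1,\dots,t_n)=\prod_{q=1}^N\prod_{i<j\in s_q}(t_i-t_j)^2\prod_{j\in\chi_1}(t_j-x_2)(t_j-x_3)\prod_{j\in\chi_2}(t_j-x_1)(t_j-x_3)\prod_{j\in\chi_3}(t_j-x_1)(t_j-x_2)$ (''$j\in\chi_a$'' meaning $j$ lies in one of the groups of $\chi_a$), $\Lambda_m=\left[\frac{N^{n}k!(N-k)!}{N!}\right]^{1/2}(m!)^{N-k}((m-1)!)^{k}$, and $\mathbf{P}_m^{(N|k_1,k_2,k_3)}(x_1,x_2,x_3|t)=\Lambda_m^{-1}\sum_{\sigma\in S_n}p(x_1,x_2,x_3|t_{\sigma(1)},\dots,t_{\sigma(n)})$. Then $\mathbf{P}_m^{(N|k_1,k_2,k_3)}(t_1,\dots,t_n)=(-1)^{(m-1)k_1}\lim_{x_3\to\infty}x_3^{-(m-1)k_3}\,\mathbf{P}_m^{(N|k_1,k_2,k_3)}(0,1,x_3|t_1,\dots,t_n)$. *)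

From HB Require Import structures.
From mathcomp Require Import all_boot all_order all_algebra all_fingroup.
From mathcomp Require Import mpoly.
Unset Printing Implicit Defensive.
Import Order.TTheory GRing.Theory Num.Theory.
Local Open Scope ring_scope.

(* The partition s_1,...,s_N of {1,...,n} is encoded by the map
   s : 'I_n -> 'I_N sending an index to (the 0-based label of) its group. *)
Definition is_partition_mk (n N m k : nat) (s : 'I_n -> 'I_N) : Prop :=
  forall q : 'I_N, #|[set i | s i == q]| = if (q < k)%N then (m - 1)%N else m.

(* p(x1,x2,x3 | t_1,...,t_n), with values in an arbitrary commutative ring S.
   chi_1 = groups with 0-based label q < k-k1,
   chi_2 = groups with k-k1 <= q < k3,
   chi_3 = groups with k3 <= q < k. *)
Definition pfun (S : comNzRingType) (n N k k1 k3 : nat) (s : 'I_n -> 'I_N)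
    (x1 x2 x3 : S) (t : 'I_n -> S) : S :=
  (\prod_(q < N) \prod_(i < n) \prod_(j < n | [&& (i < j)%N, s i == q & s j == q])
      (t i - t j) ^+ 2) *
  \prod_(j < n)
     (if (s j < k - k1)%N then (t j - x2) * (t j - x3)
      else if (s j < k3)%N then (t j - x1) * (t j - x3)
      else if (s j < k)%N then (t j - x1) * (t j - x2)
      else 1).

Definition Lambda (R : rcfType) (n N m k : nat) : R :=
  Num.sqrt (((N ^ n * k`! * (N - k)`!)%:R) / ((N`!)%:R)) *
  (((m`!) ^ (N - k) * ((m - 1)`!) ^ k)%:R).

(* P_m^{(N|k1,k2,k3)}(0,1,x3 | t) as a polynomial in the variable x3
   with coefficients in {mpoly R[n]} (variables t_i = 'X_i). *)
Definition P013 (R : rcfType) (n N m k k1 k3 : nat) (s : 'I_n -> 'I_N)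
    : {poly {mpoly R[n]}} :=
  ((Lambda R n N m k)^-1)%:MP%:P *
  \sum_(sigma : 'S_n)
     pfun _ n N k k1 k3 s 0 1 'X (fun i => ('X_(sigma i))%:P).

(* P_m^{(N|k1,k2,k3)}(t) = (-1)^{(m-1)k1} lim_{x3 -> oo} x3^{-(m-1)k3} P(0,1,x3|t).
   Since P(0,1,x3|t) is a polynomial in x3 of degree <= (m-1)k3, this limit is
   its coefficient of x3^{(m-1)k3}. *)
Definition Pm (R : rcfType) (n N m k k1 k3 : nat) (s : 'I_n -> 'I_N)
    : {mpoly R[n]} :=
  (-1) ^+ ((m - 1) * k1) * (P013 R n N m k k1 k3 s)`_((m - 1) * k3).

Definition vdm_pow (R : rcfType) (n g : nat) : {mpoly R[n]} :=
  \prod_(i < n) \prod_(j < n | (i < j)%N) ('X_i - 'X_j) ^+ (2 * g).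

(* Give x3 the weight a and t_v the weight w_v.  Every monomial x3^e t^mu in the support
   of a product of binomials has weight a e + <w, mu> at most the sum over the factors of
   the larger weight of their two terms.  As the coefficient of x3^((m-1)k3) t^nu in
   Delta^(2g) P(0,1,x3|t) is nonzero, this bound holds for the symmetrization term of some
   permutation.  With a = 0 and w = -1 on {v <= i} it gives
     (i+1) nu_i >= nu_0 + ... + nu_i
                >= g i (i+1) + sum_q (c_q (c_q - 1) + [q in chi_2 or chi_3] c_q),
   where c_q counts the first i+1 variables lying in group q; with a = 1 and w = 1 on
   {v >= i} it bounds (m-1) k3 + (n-i) nu_i from above in the same way.  The unknown
   counts are eliminated by tangent lines such as c (c - 1) >= 2 p c - p (p + 1), which
   hold because a product of two consecutive integers is nonnegative. *)

From mathcomp Require Import all_boot all_order all_algebra all_fingroup.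
From mathcomp Require Import mpoly.
From mathcomp Require Import zify.
Import Order.TTheory GRing.Theory Num.Theory.
Set Implicit Arguments.
Unset Strict Implicit.
Unset Printing Implicit Defensive.
Local Open Scope ring_scope.

Section WeightedSupport.
Context {R : nzRingType} {n : nat} {a : int} {w : 'I_n -> int}.
Implicit Types (P Q : {poly {mpoly R[n]}}) (e : nat) (mu : 'X_{1..n}) (b : int).

(* {poly {mpoly R[n]}} stands for R[t_1, ..., t_n][x3]. *)
Definition weight e mu : int := a * e%:Z + \sum_(i < n) w i * (mu i)%:Z.

Definition weight_le P b := forall e mu, (P`_e)@_mu != 0 -> weight e mu <= b.

Lemma weightD e1 e2 mu1 mu2 :
  weight (e1 + e2) (mu1 + mu2)%MM = weight e1 mu1 + weight e2 mu2.
Proof.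
rewrite /weight PoszD mulrDr addrACA; congr (_ + _).
by rewrite -big_split; apply: eq_bigr => i _; rewrite mnmDE PoszD mulrDr.
Qed.

Lemma weight_leC (c : {mpoly R[n]}) b :
  (forall mu, c@_mu != 0 -> weight 0 mu <= b) -> weight_le c%:P b.
Proof. by move=> hc [|e] mu; rewrite coefC /=; [exact: hc | rewrite mcoeff0 eqxx]. Qed.

Lemma weight_le1 : weight_le 1 0.
Proof.
apply: weight_leC => mu; rewrite mcoeff1; have [->|] := eqVneq mu 0%MM.
  by rewrite /weight mulr0 add0r big1 // => i _; rewrite mnm0E mulr0.
by rewrite mulr0n eqxx.
Qed.

Lemma weight_leXi i : weight_le ('X_i)%:P (w i).
Proof.
apply: weight_leC => mu; rewrite mcoeffX; have [<-|] := eqVneq U_(i)%MM mu.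
  rewrite /weight mulr0 add0r (bigD1 i) //= mnm1E eqxx mulr1 big1 ?addr0 //.
  by move=> j /negbTE ji; rewrite mnm1E eq_sym ji mulr0.
by rewrite mulr0n eqxx.
Qed.

Lemma weight_leX : weight_le 'X a.
Proof.
move=> e mu; rewrite coefX; have [->|] := eqVneq e 1%N; last by rewrite mcoeff0 eqxx.
rewrite mcoeff1; have [->|] := eqVneq mu 0%MM; last by rewrite mulr0n eqxx.
by rewrite /weight mulr1 big1 ?addr0 // => i _; rewrite mnm0E mulr0.
Qed.

Lemma weight_leB P Q b1 b2 :
  weight_le P b1 -> weight_le Q b2 -> weight_le (P - Q) (Num.max b1 b2).
Proof.
move=> hP hQ e mu; rewrite coefB mcoeffB le_max.
have [/hP -> //|/negbNE/eqP ->] := boolP ((P`_e)@_mu != 0).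
by rewrite sub0r oppr_eq0 => /hQ ->; rewrite orbT.
Qed.

Lemma weight_leM P Q b1 b2 :
  weight_le P b1 -> weight_le Q b2 -> weight_le (P * Q) (b1 + b2).
Proof.
move=> hP hQ e mu; rewrite coefM raddf_sum /=.
have [j nz _|all0] := pickP (fun j : 'I_e.+1 => (P`_j * Q`_(e - j))@_mu != 0); last first.
  by rewrite big1 ?eqxx // => j _; apply/eqP/negbFE/all0.
move: nz; rewrite -mcoeff_msupp => /msuppM_le/allpairsP[[mu1 mu2] /= [h1 h2 ->]].
have -> : e = (j + (e - j))%N by rewrite subnKC // -ltnS.
by rewrite weightD; apply: lerD; [apply: hP | apply: hQ]; rewrite -mcoeff_msupp.
Qed.

Lemma weight_le_prod (I : Type) (r : seq I) (p : pred I) (F : I -> {poly {mpoly R[n]}})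
    (B : I -> int) :
  (forall i, p i -> weight_le (F i) (B i)) ->
  weight_le (\prod_(i <- r | p i) F i) (\sum_(i <- r | p i) B i).
Proof.
by move=> hF; apply: (big_ind2 weight_le weight_le1) => // *; apply: weight_leM.
Qed.

Lemma weight_leXn P b l : weight_le P b -> weight_le (P ^+ l) (b *+ l).
Proof.
move=> hP; elim: l => [|l IHl]; first exact: weight_le1.
by rewrite exprS mulrS; apply: weight_leM.
Qed.

End WeightedSupport.

Arguments weight {n} a w e mu.
Arguments weight_le {R n} a w P b.

Definition vdm_bound (n g : nat) (w : 'I_n -> int) : int :=
  \sum_(i < n) \sum_(j < n | (i < j)%N) Num.max (w i) (w j) *+ (2 * g).

(* For p(0, 1, x3 | t): the constants 0 and 1 have weight 0 and x3 has weight a. *)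
Definition pfun_bound (n N k k1 k3 : nat) (s : 'I_n -> 'I_N) (a : int) (u : 'I_n -> int)
    : int :=
  \sum_(q < N) \sum_(i < n) \sum_(j < n | [&& (i < j)%N, s i == q & s j == q])
     Num.max (u i) (u j) *+ 2 +
  \sum_(j < n)
     (if (s j < k - k1)%N then Num.max (u j) 0 + Num.max (u j) a
      else if (s j < k3)%N then u j + Num.max (u j) a
      else if (s j < k)%N then u j + Num.max (u j) 0
      else 0).

Lemma weight_le_pfun (R : comNzRingType) (n N k k1 k3 : nat) (s : 'I_n -> 'I_N) a
    (w : 'I_n -> int) (t : 'I_n -> {poly {mpoly R[n]}}) (u : 'I_n -> int) :
  (forall i, weight_le a w (t i) (u i)) ->
  weight_le a w (pfun _ n N k k1 k3 s 0 1 'X t) (pfun_bound k k1 k3 s a u).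
Proof.
move=> ht; have t0 i : weight_le a w (t i - 0) (u i) by rewrite subr0.
apply: weight_leM.
  do 3![apply: weight_le_prod => ? _].
  by apply: weight_leXn; apply: weight_leB.
apply: weight_le_prod => j _.
have t1 := weight_leB (ht j) weight_le1.
have tX := weight_leB (ht j) weight_leX.
case: ifP => _; first exact: weight_leM t1 tX.
case: ifP => _; first exact: weight_leM (t0 j) tX.
by case: ifP => _; [exact: weight_leM (t0 j) t1 | exact: weight_le1].
Qed.

Lemma weight_le_vdm (R : rcfType) n g a (w : 'I_n -> int) :
  weight_le a w (vdm_pow R n g)%:P (vdm_bound g w).
Proof.
rewrite /vdm_pow rmorph_prod; apply: weight_le_prod => i _.
rewrite rmorph_prod; apply: weight_le_prod => j _.
by rewrite rmorphXn rmorphB; apply/weight_leXn/weight_leB; apply: weight_leXi.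
Qed.

(* Up to a nonzero scalar, Pm is the x3^((m-1)k3)-coefficient of a sum over permutations. *)
Lemma coef_vdm_Pm_weight (R : rcfType) N m k k1 k3 n g (s : 'I_n -> 'I_N)
    (nu : 'X_{1..n}) a w :
  (vdm_pow R n g * Pm R n N m k k1 k3 s)@_nu != 0 ->
  exists sg : 'S_n,
    weight a w ((m - 1) * k3) nu <= vdm_bound g w + pfun_bound k k1 k3 s a (w \o sg).
Proof.
pose F (sg : 'S_n) :=
  pfun _ n N k k1 k3 s 0 1 'X (fun i => ('X_(sg i) : {mpoly R[n]})%:P).
rewrite /Pm /P013 !coefCM mulrCA [vdm_pow _ _ _ * _]mulrCA mulrA.
rewrite -(rmorph_sign (@mpolyC n R)) -rmorphM mcoeffCM mulf_eq0 negb_or => /andP[_].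
rewrite -coefCM mulr_sumr coef_sum raddf_sum /=.
have [sg nz _|all0] :=
  pickP (fun sg => (((vdm_pow R n g)%:P * F sg)`_((m - 1) * k3))@_nu != 0).
  exists sg; move: nz; apply: weight_leM; first exact: weight_le_vdm.
  by apply: weight_le_pfun => i; apply: weight_leXi.
by rewrite big1 ?eqxx // => sg _; apply/eqP/negbFE/all0.
Qed.

Lemma sqr_sum_pairs (R : comNzRingType) n (x : 'I_n -> R) :
  (\sum_i x i) ^+ 2 = \sum_i x i ^+ 2 + (\sum_(i < n) \sum_(j < n | (i < j)%N) x i * x j) *+ 2.
Proof.
have row (i : 'I_n) : \sum_j x i * x j =
    x i ^+ 2 + \sum_(j < n | (i < j)%N) x i * x j + \sum_(j < n | (j < i)%N) x j * x i.
  rewrite (bigD1 i) //= expr2 -addrA; congr (_ + _).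
  rewrite (bigID (fun j : 'I_n => (i < j)%N)) /=; congr (_ + _).
    by apply: eq_bigl => j; rewrite andb_idl // => /ltn_eqF/negbT; rewrite eq_sym.
  apply: eq_big => [j|j _]; last exact: mulrC.
  by rewrite -leqNgt ltn_neqAle.
rewrite expr2 big_distrlr /= (eq_bigr _ (fun i _ => row i)) !big_split /= -addrA.
congr (_ + _); rewrite mulr2n; congr (_ + _).
by rewrite (exchange_big_dep xpredT).
Qed.

Lemma pairs_ind n (b : 'I_n -> bool) :
  2 * \sum_(i < n) \sum_(j < n | (i < j)%N) (b i && b j)%:Z =
  (\sum_i (b i)%:Z) * (\sum_i (b i)%:Z - 1).
Proof.
rewrite mulrBr mulr1 -expr2 sqr_sum_pairs addrAC.
have -> : \sum_i (b i)%:Z ^+ 2 = \sum_i (b i)%:Z by apply: eq_bigr => i _; case: (b i).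
rewrite subrr add0r mulr_natl; congr (_ *+ 2); apply: eq_bigr => i _; apply: eq_bigr => j _.
by case: (b i); case: (b j).
Qed.

Lemma max_indN (x y : bool) : Num.max (- x%:Z) (- y%:Z) = - (x && y)%:Z.
Proof. by case: x; case: y. Qed.

Lemma max_ind (x y : bool) : Num.max x%:Z y%:Z = 1 - (~~ x && ~~ y)%:Z.
Proof. by case: x; case: y. Qed.

Lemma sum_pairs_scale n (c : int) (f : 'I_n -> 'I_n -> int) :
  \sum_(i < n) \sum_(j < n | (i < j)%N) c * f i j =
  c * \sum_(i < n) \sum_(j < n | (i < j)%N) f i j.
Proof. by rewrite mulr_sumr; apply: eq_bigr => i _; rewrite mulr_sumr. Qed.

Lemma vdm_bound_indN n g (b : 'I_n -> bool) :
  vdm_bound g (fun v => - (b v)%:Z) =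
  - (g%:Z * ((\sum_i (b i)%:Z) * (\sum_i (b i)%:Z - 1))).
Proof.
rewrite /vdm_bound -pairs_ind mulrA -mulNr -sum_pairs_scale.
apply: eq_bigr => i _; apply: eq_bigr => j _.
by rewrite max_indN; case: (b i); case: (b j) => /=; lia.
Qed.

Lemma vdm_bound_ind n g (b : 'I_n -> bool) :
  vdm_bound g (fun v => (b v)%:Z) =
  g%:Z * (n%:Z * (n%:Z - 1)) -
  g%:Z * ((\sum_i (~~ b i)%:Z) * (\sum_i (~~ b i)%:Z - 1)).
Proof.
have sum_true : \sum_(i < n) (true : nat)%:Z = n%:Z by rewrite sumr_const card_ord; lia.
rewrite -sum_true -(pairs_ind (fun=> true)).
rewrite /vdm_bound -pairs_ind !mulrA -!sum_pairs_scale -sumrB.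
apply: eq_bigr => i _; rewrite -sumrB; apply: eq_bigr => j _.
by rewrite max_ind; case: (b i); case: (b j) => /=; lia.
Qed.

Section Groups.
Variables (n N : nat) (s : 'I_n -> 'I_N).

Definition count_in_group (b : pred 'I_n) (q : 'I_N) : int :=
  \sum_(i < n) (b i && (s i == q))%:Z.

Lemma count_in_groupC (b : pred 'I_n) q :
  count_in_group b q + count_in_group (predC b) q = count_in_group predT q.
Proof. by rewrite -big_split; apply: eq_bigr => i _ /=; case: (b i); case: (s i == q). Qed.

Lemma sum_count_in_group (b : pred 'I_n) :
  \sum_(q < N) count_in_group b q = \sum_(i < n) (b i)%:Z.
Proof.
rewrite exchange_big; apply: eq_bigr => i _.
rewrite (bigD1 (s i)) //= eqxx andbT big1 ?addr0 // => q /negbTE.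
by rewrite eq_sym => ->; rewrite andbF.
Qed.

Lemma sum_count_in_group_perm (sg : 'S_n) (b : pred 'I_n) :
  \sum_(q < N) count_in_group (b \o sg) q = \sum_(v < n) (b v)%:Z.
Proof. by rewrite sum_count_in_group [RHS](reindex_inj (@perm_inj _ sg)). Qed.

Lemma sum_indicator_by_group (h : 'I_N -> int) (b : pred 'I_n) :
  \sum_(i < n) h (s i) * (b i)%:Z = \sum_(q < N) h q * count_in_group b q.
Proof.
rewrite (partition_big s xpredT) //=; apply: eq_bigr => q _.
rewrite /count_in_group mulr_sumr big_mkcond; apply: eq_bigr => i _.
by case: eqP => [->|_]; rewrite ?andbT ?andbF ?mulr0.
Qed.

Lemma sum_by_group (h : 'I_N -> int) :
  \sum_(i < n) h (s i) = \sum_(q < N) h q * count_in_group predT q.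
Proof. by rewrite -sum_indicator_by_group; apply: eq_bigr => i _; rewrite mulr1. Qed.

Lemma group_pairs_indN (b : pred 'I_n) q :
  \sum_(i < n) \sum_(j < n | [&& (i < j)%N, s i == q & s j == q])
     Num.max (- (b i)%:Z) (- (b j)%:Z) *+ 2 =
  - (count_in_group b q * (count_in_group b q - 1)).
Proof.
rewrite -pairs_ind -mulNr -mulr_natl -sum_pairs_scale; apply: eq_bigr => i _.
rewrite big_mkcond [RHS]big_mkcond; apply: eq_bigr => j _ /=.
by rewrite max_indN; case: (i < j)%N; case: (s i == q); case: (s j == q);
  case: (b i); case: (b j).
Qed.

Lemma group_pairs_ind (b : pred 'I_n) q :
  \sum_(i < n) \sum_(j < n | [&& (i < j)%N, s i == q & s j == q])
     Num.max (b i)%:Z (b j)%:Z *+ 2 =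
  count_in_group predT q * (count_in_group predT q - 1) -
  count_in_group (predC b) q * (count_in_group (predC b) q - 1).
Proof.
rewrite -!pairs_ind -!sum_pairs_scale -sumrB; apply: eq_bigr => i _.
rewrite -sumrB big_mkcond [RHS]big_mkcond; apply: eq_bigr => j _ /=.
by rewrite max_ind; case: (i < j)%N; case: (s i == q); case: (s j == q);
  case: (b i); case: (b j).
Qed.

Lemma pfun_bound_indN k k1 k3 (b : pred 'I_n) : (k3 <= k)%N ->
  pfun_bound k k1 k3 s 0 (fun v => - (b v)%:Z) =
  - \sum_(q < N) (count_in_group b q * (count_in_group b q - 1) +
                  (k - k1 <= q < k)%N%:Z * count_in_group b q).
Proof.
move=> k3k; rewrite /pfun_bound (eq_bigr _ (fun q _ => group_pairs_indN b q)).
have factor_bound j :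
    (if (s j < k - k1)%N then Num.max (- (b j)%:Z) 0 + Num.max (- (b j)%:Z) 0
      else if (s j < k3)%N then - (b j)%:Z + Num.max (- (b j)%:Z) 0
      else if (s j < k)%N then - (b j)%:Z + Num.max (- (b j)%:Z) 0 else 0) =
      - ((k - k1 <= s j < k)%N%:Z * (b j)%:Z).
  rewrite [(k - k1 <= _)%N]leqNgt; case: ifP => _ /=; first by case: (b j).
  case: ifP => [lt3|_]; first by rewrite (leq_trans lt3 k3k); case: (b j).
  by case: ifP; case: (b j).
rewrite (eq_bigr _ (fun j _ => factor_bound j)) !sumrN.
have /= -> := sum_indicator_by_group (fun q => (k - k1 <= q < k)%N%:Z) b.
by rewrite -opprD -big_split.
Qed.

Lemma pfun_bound_ind k k1 k3 (b : pred 'I_n) : (k3 <= k)%N -> (k - k1 <= k3)%N ->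
  pfun_bound k k1 k3 s 1 (fun v => (b v)%:Z) =
  \sum_(q < N)
    (count_in_group predT q * (count_in_group predT q - 1) -
     count_in_group (predC b) q * (count_in_group (predC b) q - 1) +
     (q < k3)%N%:Z * count_in_group predT q +
     ((q < k3)%N%:Z + 2 * (k3 <= q < k)%N%:Z) *
       (count_in_group predT q - count_in_group (predC b) q)).
Proof.
move=> k3k k13; rewrite /pfun_bound (eq_bigr _ (fun q _ => group_pairs_ind b q)).
have factor_bound j :
    (if (s j < k - k1)%N then Num.max (b j)%:Z 0 + Num.max (b j)%:Z 1
      else if (s j < k3)%N then (b j)%:Z + Num.max (b j)%:Z 1
      else if (s j < k)%N then (b j)%:Z + Num.max (b j)%:Z 0 else 0) =
      (s j < k3)%N%:Z +
      ((s j < k3)%N%:Z + 2 * (k3 <= s j < k)%N%:Z) * (b j)%:Z.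
  rewrite [(k3 <= _)%N]leqNgt; case: ifP => [lt1|_].
    by rewrite (leq_trans lt1 k13); case: (b j).
  by case: ifP => _ /=; [|case: ifP => _]; case: (b j).
rewrite (eq_bigr _ (fun j _ => factor_bound j)) [X in _ + X = _]big_split /=.
have /= -> := sum_by_group (fun q => (q < k3)%N%:Z).
have /= -> := sum_indicator_by_group (fun q => (q < k3)%N%:Z + 2 * (k3 <= q < k)%N%:Z) b.
rewrite -!big_split /=; apply: eq_bigr => q _.
by rewrite -(count_in_groupC b) addrK addrA.
Qed.

End Groups.

Lemma sum_ord_interval n a b : (a <= b <= n)%N ->
  \sum_(v < n) (a <= v < b)%N%:Z = (b - a)%N%:Z.
Proof.
case/andP=> ab bn; rewrite -(big_mkord xpredT (fun v => (a <= v < b)%N%:Z)).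
rewrite (big_cat_nat (n := a)) ?(leq_trans ab bn) //= (big_cat_nat (n := b) (m := a)) //=.
have -> : \sum_(0 <= v < a) (a <= v < b)%N%:Z = 0.
  by rewrite big_nat_cond big1 // => v /andP[/andP[_ va] _]; rewrite leqNgt va.
have -> : \sum_(b <= v < n) (a <= v < b)%N%:Z = 0.
  by rewrite big_nat_cond big1 // => v /andP[/andP[bv _] _]; rewrite ltnNge bv andbF.
rewrite big_nat_cond (eq_bigr (fun=> 1)) => [|v /andP[-> _] //].
by rewrite -big_nat_cond sumr_const_nat add0r addr0; lia.
Qed.

Lemma count_in_group_partition n N m k (s : 'I_n -> 'I_N) q :
  is_partition_mk n N m k s ->
  count_in_group s predT q = (if (q < k)%N then (m - 1)%N else m)%:Z.
Proof.
move=> /(_ q) <-; rewrite -sum1_card (big_morph Posz PoszD (erefl 0%:Z)) big_mkcond.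
by apply: eq_bigr => i _; rewrite inE; case: (s i == q).
Qed.

Lemma consecutive_mul_ge0 (x : int) : 0 <= x * (x - 1).
Proof.
by have [?|?] := lerP x 0; [apply: mulr_le0 | apply: mulr_ge0]; lia.
Qed.

Section ExponentBounds.
Variables (R : rcfType) (N m k k1 k3 n g : nat) (s : 'I_n -> 'I_N) (nu : 'X_{1..n}).
Hypothesis nu_sorted : forall i j : 'I_n, (i <= j)%N -> (nu i <= nu j)%N.
Hypothesis coef_nz : (vdm_pow R n g * Pm R n N m k k1 k3 s)@_nu != 0.
Hypotheses (m_gt0 : (0 < m)%N) (k_le_N : (k <= N)%N) (n_def : n = (m * N - k)%N).
Hypotheses (k1_le_k : (k1 <= k)%N) (k3_le_k : (k3 <= k)%N) (k1_k3 : (k - k1 <= k3)%N).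
Hypothesis s_partition : is_partition_mk n N m k s.

Lemma prefix_count_bound (i : 'I_n) :
  exists c : 'I_N -> int, [/\ forall q, 0 <= c q, \sum_q c q = i.+1%:Z &
    g%:Z * (i.+1%:Z * i%:Z) +
    \sum_q (c q * (c q - 1) + (k - k1 <= q < k)%N%:Z * c q) <= i.+1%:Z * (nu i)%:Z].
Proof.
pose b (v : 'I_n) := (v <= i)%N.
have sum_b : \sum_(v < n) (b v)%:Z = i.+1%:Z.
  by rewrite -[i.+1]subn0 -(@sum_ord_interval n 0 i.+1) ?ltn_ord.
have [sg] := coef_vdm_Pm_weight 0 (fun v => - (b v)%:Z) coef_nz.
rewrite vdm_bound_indN (pfun_bound_indN _ _ (b \o sg)) // sum_b => bound.
exists (count_in_group s (b \o sg)); split.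
- by move=> q; apply: sumr_ge0 => v _.
- by rewrite sum_count_in_group_perm.
have : - (i.+1%:Z * (nu i)%:Z) <= weight 0 (fun v => - (b v)%:Z) ((m - 1) * k3) nu.
  rewrite /weight mul0r add0r -sum_b mulr_suml -sumrN; apply: ler_sum => v _.
  rewrite mulNr lerN2 /b; case: leqP => vi /=; rewrite ?mul0r ?mul1r //.
  by rewrite lez_nat nu_sorted.
move=> /le_trans/(_ bound).
set S := \sum_(q < N) _; lia.
Qed.

Lemma suffix_count_bound (i : 'I_n) :
  exists e : 'I_N -> int, [/\ forall q, 0 <= e q, \sum_q e q = i%:Z &
    ((m - 1) * k3)%N%:Z + (n - i)%N%:Z * (nu i)%:Z <=
    g%:Z * (n%:Z * (n%:Z - 1) - i%:Z * (i%:Z - 1)) +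
    \sum_q (m%:Z * (m%:Z - 1) - e q * (e q - 1) -
            ((q < k3)%N%:Z + 2 * (k3 <= q < k)%N%:Z) * e q)].
Proof.
pose b (v : 'I_n) := (i <= v)%N.
have sum_b : \sum_(v < n) (b v)%:Z = (n - i)%N%:Z.
  rewrite -(@sum_ord_interval n i n) ?leqnn ?(ltnW (ltn_ord i)) //.
  by apply: eq_bigr => v _; rewrite ltn_ord andbT.
have sum_nb : \sum_(v < n) (~~ b v)%:Z = i%:Z.
  rewrite -[i : nat]subn0 -(@sum_ord_interval n 0 i) ?(ltnW (ltn_ord i)) //.
  by apply: eq_bigr => v _; rewrite /b -ltnNge.
have [sg] := coef_vdm_Pm_weight 1 (fun v => (b v)%:Z) coef_nz.
rewrite vdm_bound_ind (pfun_bound_ind _ (b \o sg)) // sum_nb => bound.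
exists (count_in_group s (predC (b \o sg))); split.
- by move=> q; apply: sumr_ge0 => v _.
- by rewrite (sum_count_in_group_perm s sg (predC b)).
have : ((m - 1) * k3)%N%:Z + (n - i)%N%:Z * (nu i)%:Z <=
       weight 1 (fun v => (b v)%:Z) ((m - 1) * k3) nu.
  rewrite /weight mul1r lerD2l -sum_b mulr_suml; apply: ler_sum => v _.
  rewrite /b; case: leqP => iv /=; rewrite ?mul0r ?mul1r //.
  by rewrite lez_nat nu_sorted.
move=> /le_trans/(_ bound).
set e := count_in_group s (predC (b \o sg)).
have group_cost q :
    count_in_group s predT q * (count_in_group s predT q - 1) - e q * (e q - 1) +
    (q < k3)%N%:Z * count_in_group s predT q +
    ((q < k3)%N%:Z + 2 * (k3 <= q < k)%N%:Z) * (count_in_group s predT q - e q) =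
    m%:Z * (m%:Z - 1) - e q * (e q - 1) - ((q < k3)%N%:Z + 2 * (k3 <= q < k)%N%:Z) * e q.
  have m1 : (m - 1)%N%:Z = m%:Z - 1 by lia.
  rewrite (count_in_group_partition q s_partition) fun_if m1.
  by case: (ltnP q k3) => q3; case: (ltnP q k) => qk /=; lia.
rewrite (eq_bigr _ (fun q _ => group_cost q)); set S := \sum_(q < N) _; lia.
Qed.

(* K and K' are tangent-line bounds for the cost of a group outside, resp. inside,
   chi_2 u chi_3. *)
Lemma nu_ge_tangent (p j : nat) (i : 'I_n) (t : nat) (lam K K' : int) :
  (i : nat) = (p * N + j - 1)%N -> (0 < j)%N ->
  (forall c : int, 0 <= c -> lam * c - K <= c * (c - 1)) ->
  (forall c : int, 0 <= c -> lam * c - K' <= c * c) ->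
  (p%:Z * N%:Z + j%:Z) * (t%:Z - 1) <
    lam * (p%:Z * N%:Z + j%:Z) - (N%:Z * K + k1%:Z * (K' - K)) ->
  (t + (p * N + j - 1) * g <= nu i)%N.
Proof.
move=> iE j_gt0 ge_K ge_K' tight; rewrite -iE.
have iE' : i.+1%:Z = p%:Z * N%:Z + j%:Z by rewrite iE; lia.
rewrite -iE' in tight; have [c [c_ge0 sum_c bound]] := prefix_count_bound i.
have sum_gamma : \sum_(q < N) (k - k1 <= q < k)%N%:Z = k1%:Z.
  by rewrite sum_ord_interval ?leq_subr ?subKn.
have : lam * i.+1%:Z - (N%:Z * K + k1%:Z * (K' - K)) <=
       \sum_q (c q * (c q - 1) + (k - k1 <= q < k)%N%:Z * c q).
  have -> : lam * i.+1%:Z - (N%:Z * K + k1%:Z * (K' - K)) =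
      \sum_q (lam * c q - (K + (k - k1 <= q < k)%N%:Z * (K' - K))).
    rewrite sumrB -mulr_sumr sum_c big_split /= sumr_const card_ord -mulr_suml sum_gamma.
    lia.
  apply: ler_sum => q _; case: (k - k1 <= q < k)%N => /=.
    by have := ge_K' (c q) (c_ge0 q); lia.
  by have := ge_K (c q) (c_ge0 q); lia.
move=> cost_ge.
have : i.+1%:Z * (t%:Z + (i * g)%N%:Z) < i.+1%:Z * ((nu i)%:Z + 1).
  move: bound cost_ge; set S := \sum_q _; lia.
by rewrite ltr_pM2l //; lia.
Qed.

(* K0, K1 and K2 are tangent-line bounds for the cost of a group outside chi_1 u chi_2 u
   chi_3, inside chi_1 u chi_2, and inside chi_3. *)
Lemma suffix_cost_le (e : 'I_N -> int) (l : int) (lam K0 K1 K2 : int) :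
  (forall q, 0 <= e q) -> \sum_q e q = l ->
  (forall e : int, 0 <= e -> lam * e - K0 <= e * (e - 1)) ->
  (forall e : int, 0 <= e -> lam * e - K1 <= e * e) ->
  (forall e : int, 0 <= e -> lam * e - K2 <= e * (e + 1)) ->
  \sum_q (m%:Z * (m%:Z - 1) - e q * (e q - 1) -
          ((q < k3)%N%:Z + 2 * (k3 <= q < k)%N%:Z) * e q) <=
  N%:Z * (m%:Z * (m%:Z - 1) + K0) + k3%:Z * (K1 - K0) + (k%:Z - k3%:Z) * (K2 - K0) - lam * l.
Proof.
move=> e_ge0 sum_e ge_K0 ge_K1 ge_K2.
have sum_lt_k3 : \sum_(q < N) (q < k3)%N%:Z = k3%:Z.
  by rewrite -[k3 in RHS]subn0 -(@sum_ord_interval N) ?(leq_trans k3_le_k).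
have sum_mid : \sum_(q < N) (k3 <= q < k)%N%:Z = k%:Z - k3%:Z.
  by rewrite sum_ord_interval ?k3_le_k //; lia.
have sum_const (x : int) : \sum_(q < N) x = N%:Z * x by rewrite sumr_const card_ord; lia.
have -> : N%:Z * (m%:Z * (m%:Z - 1) + K0) + k3%:Z * (K1 - K0) +
    (k%:Z - k3%:Z) * (K2 - K0) - lam * l =
    \sum_(q < N) (m%:Z * (m%:Z - 1) + K0 + (q < k3)%N%:Z * (K1 - K0) +
                  (k3 <= q < k)%N%:Z * (K2 - K0) - lam * e q).
  rewrite sumrB -mulr_sumr sum_e !big_split /= !sum_const -!mulr_suml.
  by rewrite sum_lt_k3 sum_mid; lia.
apply: ler_sum => q _; have := e_ge0 q.
case: (ltnP q k3) => q3; case: (ltnP q k) => qk /=.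
- by have := ge_K1 (e q) (e_ge0 q); lia.
- lia.
- by have := ge_K2 (e q) (e_ge0 q); lia.
- by have := ge_K0 (e q) (e_ge0 q); lia.
Qed.

Lemma nu_le_tangent (p j : nat) (i : 'I_n) (U : nat) (lam K0 K1 K2 : int) :
  (i : nat) = (p * N + j - 1)%N -> (0 < j)%N ->
  (forall e : int, 0 <= e -> lam * e - K0 <= e * (e - 1)) ->
  (forall e : int, 0 <= e -> lam * e - K1 <= e * e) ->
  (forall e : int, 0 <= e -> lam * e - K2 <= e * (e + 1)) ->
  N%:Z * (m%:Z * (m%:Z - 1) + K0) + k3%:Z * (K1 - K0) + (k%:Z - k3%:Z) * (K2 - K0) -
    lam * (p%:Z * N%:Z + j%:Z - 1) - (m%:Z - 1) * k3%:Z <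
    (m%:Z * N%:Z - k%:Z - p%:Z * N%:Z - j%:Z + 1) * (U%:Z + 1) ->
  (nu i <= U + ((m + p) * N - k + j - 2) * g)%N.
Proof.
move=> iE j_gt0 ge_K0 ge_K1 ge_K2 tight; have i_lt_n := ltn_ord i.
have -> : ((m + p) * N - k + j - 2 = n + i - 1)%N by lia.
have nE : m%:Z * N%:Z - k%:Z - p%:Z * N%:Z - j%:Z + 1 = n%:Z - i%:Z by lia.
have iE' : p%:Z * N%:Z + j%:Z - 1 = i%:Z by lia.
rewrite nE iE' in tight.
have [e [e_ge0 sum_e bound]] := suffix_count_bound i.
have cost_le := suffix_cost_le e_ge0 sum_e ge_K0 ge_K1 ge_K2.
have ni : (n - i)%N%:Z = n%:Z - i%:Z by lia.
have mk3 : ((m - 1) * k3)%N%:Z = (m%:Z - 1) * k3%:Z by rewrite PoszM; congr (_ * _); lia.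
have : (n%:Z - i%:Z) * (nu i)%:Z <
       (n%:Z - i%:Z) * (U%:Z + (n%:Z + i%:Z - 1) * g%:Z + 1).
  move: bound cost_le tight; rewrite ni mk3; set S := \sum_(q < N) _; lia.
have nii : (n + i - 1)%N%:Z = n%:Z + i%:Z - 1 by lia.
by rewrite ltr_pM2l -?lez_nat ?PoszD ?PoszM ?nii; lia.
Qed.

Lemma nu_ge_p (p j : nat) (i : 'I_n) : (0 < j)%N -> (i : nat) = (p * N + j - 1)%N ->
  (p + (p * N + j - 1) * g <= nu i)%N.
Proof.
move=> j_gt0 iE.
apply: (nu_ge_tangent (lam := 2 * p%:Z) (K := p%:Z * (p%:Z + 1))
                      (K' := p%:Z * (p%:Z + 1)) iE j_gt0).
- by move=> c _; have := consecutive_mul_ge0 (c - p%:Z); lia.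
- by move=> c c_ge0; have := consecutive_mul_ge0 (c - p%:Z); lia.
by have : 0 <= p%:Z * j%:Z by []; lia.
Qed.

Lemma nu_ge_p1 (p j : nat) (i : 'I_n) : (N - k1 < j)%N -> (i : nat) = (p * N + j - 1)%N ->
  (p + 1 + (p * N + j - 1) * g <= nu i)%N.
Proof.
move=> j_gt iE.
apply: (nu_ge_tangent (lam := 2 * p%:Z + 1) (K := (p%:Z + 1) * (p%:Z + 1))
                      (K' := p%:Z * (p%:Z + 1)) iE (leq_ltn_trans (leq0n _) j_gt)).
- by move=> c _; have := sqr_ge0 (c - p%:Z - 1); rewrite expr2; lia.
- by move=> c _; have := consecutive_mul_ge0 (c - p%:Z); lia.
have : 0 <= (p%:Z + 1) * (j%:Z + k1%:Z - N%:Z - 1) by apply: mulr_ge0; lia.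
lia.
Qed.

Lemma nu_le_mp1 (p j : nat) (i : 'I_n) : (p < m)%N -> (0 < j <= N - k)%N ->
  (i : nat) = (p * N + j - 1)%N -> (nu i <= m + p - 1 + ((m + p) * N - k + j - 2) * g)%N.
Proof.
move=> p_lt_m /andP[j_gt0 j_le] iE.
apply: (nu_le_tangent (lam := 2 * p%:Z) (K0 := p%:Z * (p%:Z + 1)) (K1 := p%:Z * p%:Z)
                      (K2 := p%:Z * (p%:Z - 1)) iE j_gt0).
- by move=> e _; have := consecutive_mul_ge0 (e - p%:Z); lia.
- by move=> e _; have := sqr_ge0 (e - p%:Z); rewrite expr2; lia.
- by move=> e _; have := consecutive_mul_ge0 (e - p%:Z + 1); lia.
have : 0 <= (m%:Z - p%:Z) * (N%:Z - k%:Z - j%:Z) by apply: mulr_ge0; lia.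
have : 0 <= k3%:Z * (m%:Z - p%:Z - 1) by apply: mulr_ge0; lia.
have -> : (m + p - 1)%N%:Z = m%:Z + p%:Z - 1 by lia.
lia.
Qed.

Lemma nu_le_mp1_k3 (p j : nat) (i : 'I_n) : (p + 2 <= m)%N ->
  (N - k < j <= N - k + k3)%N -> (i : nat) = (p * N + j - 1)%N ->
  (nu i <= m + p - 1 + ((m + p) * N - k + j - 2) * g)%N.
Proof.
move=> p_lt_m /andP[j_gt j_le] iE.
apply: (nu_le_tangent (lam := 2 * p%:Z + 1) (K0 := (p%:Z + 1) * (p%:Z + 1))
                      (K1 := p%:Z * (p%:Z + 1)) (K2 := p%:Z * p%:Z)
                      iE (leq_ltn_trans (leq0n _) j_gt)).
- by move=> e _; have := sqr_ge0 (e - p%:Z - 1); rewrite expr2; lia.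
- by move=> e _; have := consecutive_mul_ge0 (e - p%:Z); lia.
- by move=> e _; have := sqr_ge0 (e - p%:Z); rewrite expr2; lia.
have : 0 <= (m%:Z - p%:Z - 1) * (N%:Z - k%:Z + k3%:Z - j%:Z) by apply: mulr_ge0; lia.
have -> : (m + p - 1)%N%:Z = m%:Z + p%:Z - 1 by lia.
lia.
Qed.

Lemma nu_le_mp (p j : nat) (i : 'I_n) : (p + 2 <= m)%N ->
  (N - k + k3 < j <= N)%N -> (i : nat) = (p * N + j - 1)%N ->
  (nu i <= m + p + ((m + p) * N - k + j - 2) * g)%N.
Proof.
move=> p_lt_m /andP[j_gt j_le] iE.
apply: (nu_le_tangent (lam := 2 * p%:Z + 2) (K0 := (p%:Z + 1) * (p%:Z + 2))
                      (K1 := (p%:Z + 1) * (p%:Z + 1)) (K2 := p%:Z * (p%:Z + 1))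
                      iE (leq_ltn_trans (leq0n _) j_gt)).
- by move=> e _; have := consecutive_mul_ge0 (e - p%:Z - 1); lia.
- by move=> e _; have := sqr_ge0 (e - p%:Z - 1); rewrite expr2; lia.
- by move=> e _; have := consecutive_mul_ge0 (e - p%:Z); lia.
have : 0 <= (m%:Z - p%:Z - 1) * (2 * N%:Z - k%:Z - j%:Z) by apply: mulr_ge0; lia.
have : 0 <= k3%:Z * (m%:Z - p%:Z - 2) by apply: mulr_ge0; lia.
lia.
Qed.

End ExponentBounds.

Theorem proposition2 (R : rcfType) (N m k k1 k2 k3 n g : nat)
    (s : 'I_n -> 'I_N) (nu : 'X_{1..n}) :
  (1 <= N)%N -> (1 <= m)%N ->
  (k1 + k2 + k3 = 2 * k)%N ->
  (k1 <= k)%N -> (k2 <= k)%N -> (k3 <= k)%N -> (k <= N)%N ->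
  n = (m * N - k)%N ->
  is_partition_mk n N m k s ->
  (forall i j : 'I_n, (i <= j)%N -> (nu i <= nu j)%N) ->
  (vdm_pow R n g * Pm R n N m k k1 k3 s)@_nu != 0 ->
  [/\
      (forall (p j : nat) (i : 'I_n), (p + 2 <= m)%N -> (1 <= j <= N - k1)%N ->
         val i = (p * N + j - 1)%N -> (p + (p * N + j - 1) * g <= nu i)%N),
      (forall (p j : nat) (i : 'I_n), (p + 2 <= m)%N -> (N - k1 + 1 <= j <= N)%N ->
         val i = (p * N + j - 1)%N -> (p + 1 + (p * N + j - 1) * g <= nu i)%N) &
      (forall (j : nat) (i : 'I_n), (1 <= j <= N - k)%N ->
         val i = ((m - 1) * N + j - 1)%N ->
         (m - 1 + ((m - 1) * N + j - 1) * g <= nu i)%N)] /\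
  [/\
      (forall (p j : nat) (i : 'I_n), (p < m)%N -> (1 <= j <= N - k)%N ->
         val i = (p * N + j - 1)%N ->
         (nu i <= m + p - 1 + ((m + p) * N - k + j - 2) * g)%N),
      (forall (p j : nat) (i : 'I_n), (p + 2 <= m)%N ->
         (N - k + 1 <= j <= N - k + k3)%N ->
         val i = (p * N + j - 1)%N ->
         (nu i <= m + p - 1 + ((m + p) * N - k + j - 2) * g)%N) &
      (forall (p j : nat) (i : 'I_n), (p + 2 <= m)%N ->
         (N - k + k3 + 1 <= j <= N)%N ->
         val i = (p * N + j - 1)%N ->
         (nu i <= m + p + ((m + p) * N - k + j - 2) * g)%N)].
Proof.
move=> _ m_gt0 k_sum k1_le_k k2_le_k k3_le_k k_le_N n_def s_part nu_sorted coef_nz.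
have k1_k3 : (k - k1 <= k3)%N by lia.
split; split.
- by move=> p j i _ /andP[j_gt0 _] iE; apply: (nu_ge_p nu_sorted coef_nz).
- move=> p j i _ /andP[j_gt _] iE; rewrite addn1 in j_gt.
  by apply: (nu_ge_p1 nu_sorted coef_nz).
- by move=> j i /andP[j_gt0 _] iE; apply: (nu_ge_p nu_sorted coef_nz).
- by move=> p j i p_lt_m j_range iE; apply: (nu_le_mp1 nu_sorted coef_nz).
- move=> p j i p_lt_m j_range iE; rewrite addn1 in j_range.
  by apply: (nu_le_mp1_k3 nu_sorted coef_nz).
- move=> p j i p_lt_m j_range iE; rewrite addn1 in j_range.
  by apply: (nu_le_mp nu_sorted coef_nz).
Qed.
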